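(* Let $\lambda\in(0,1)$, $T\ge1$, $p\in\Delta(K)$, $q\in\Delta(L)$. The value $V_{\lambda,T}(p,q)$ of the $\lambda$-discounted $T$-stage game satisfies $$V_{\lambda,T}(p,q)=\max\sum_{l\in L}q^lu_{l,0;\lambda,T}$$ over $x\in X_T(p)$, reals $u_{l,0;\lambda,T}$ and real $|A|\times|B|$ matrices $u_{l,h^A,h^B;\lambda,T}$ ($l\in L$, $h^A\in A^{s-1},h^B\in B^{s-1}$, $s=1,\dots,T-1$; equal to $0$ for histories of length $T-1$), subject to $\lambda\sum_k(M^{kl})^Tx_{k,\emptyset,\emptyset}+(1-\lambda)(u_{l,\emptyset,\emptyset;\lambda,T})^T\mathbf1\ge u_{l,0;\lambda,T}\mathbf1$ for all $l$, and $\lambda\sum_k(M^{kl})^Tx_{k,(h^A,a),(h^B,b)}+(1-\lambda)(u_{l,(h^A,a),(h^B,b);\lambda,T})^T\mathbf1\ge u^{a,b}_{l,h^A,h^B;\lambda,T}\mathbf1$ for all $s=1,\dots,T-1$, $l$, $h^A\in A^{s-1},h^B\in B^{s-1}$, $a,b$. The $x$-part $x^\star$ of an optimal solution is an optimal realization plan of player 1 in $\Gamma_{\lambda,T}(p,q)$, and $u_{l,0;\lambda,T}(x^\star)=u^\star_{l,0;\lambda,T}$ for all $l$, where $u^\star_{:,0;\lambda,T}$ is the corresponding part of the optimal solution. Dually, $V_{\lambda,T}(p,q)=\min\sum_kp^kw_{k,0;\lambda,T}$ over $y\in Y_T(q)$, reals $w_{k,0;\lambda,T}$ and $|A|\times|B|$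 matrices $w_{k,h^A,h^B;\lambda,T}$ (zero for histories of length $T-1$), subject to $\lambda\sum_lM^{kl}y_{l,\emptyset,\emptyset}+(1-\lambda)w_{k,\emptyset,\emptyset;\lambda,T}\mathbf1\le w_{k,0;\lambda,T}\mathbf1$ for all $k$ and $\lambda\sum_lM^{kl}y_{l,(h^A,a),(h^B,b)}+(1-\lambda)w_{k,(h^A,a),(h^B,b);\lambda,T}\mathbf1\le w^{a,b}_{k,h^A,h^B;\lambda,T}\mathbf1$ for all $s=1,\dots,T-1$, $k$, $h^A,h^B$ of length $s-1$, $a,b$; the $y$-part $y^\star$ of an optimal solution is an optimal realization plan of player 2 and $w_{k,0;\lambda,T}(y^\star)=w^\star_{k,0;\lambda,T}$ for all $k$.
   Context: Setting: nonempty finite $K,L,A,B$; $M:K\times L\times A\times B\to\mathbb R$, $M^{kl}=(M(k,l,a,b))_{a,b}$; $p\in\Delta(K),q\in\Delta(L)$ with positive entries. Types $k\sim p$, $l\sim q$ drawn independently and told privately to players 1 and 2; at each stage actions $a_t\in A,b_t\in B$ chosen simultaneously and announced; behavior strategies $\sigma_t:K\times A^{t-1}\times B^{t-1}\to\Delta(A)$, $\tau_t:L\times A^{t-1}\times B^{t-1}\to\Delta(B)$. The $\lambda$-discounted $T$-stage game $\Gamma_{\lambda,T}(p,q)$ has payoff $\mathbb E_{p,q,\sigma,\tau}[\sum_{t=1}^T\lambda(1-\lambda)^{t-1}M(k,l,a_t,b_t)]$ to player 1 (maximizer), value $V_{\lambda,T}(p,q)$. $X_T(p)$: families $x=(x_{k,h^A,h^B})$,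 $k\in K$, $h^A\in A^{t-1},h^B\in B^{t-1}$, $t=1,\dots,T$, $x_{k,h^A,h^B}\in\mathbb R^{|A|}$, $x\ge0$, $\mathbf1^Tx_{k,\emptyset,\emptyset}=p^k$, $\mathbf1^Tx_{k,(h^A,a),(h^B,b)}=x^a_{k,h^A,h^B}$; the realization plan of $\sigma$ is $x^{a_t}_{k,h_t^A,h_t^B}=p^k\prod_{s=1}^t\sigma^{a_s}_s(k,h^A_s,h^B_s)$ (prefix histories), and $x\in X_T(p)$ determines $\sigma$ by ratios. $Y_T(q)$ symmetric with $y_{l,h^A,h^B}\in\mathbb R^{|B|}$ and $q$. An optimal realization plan is that of a security strategy. Anti-discounted weighted future security payoffs at stage 0: for $x\in X_T(p)$ with strategy $\sigma$, $u_{l,0;\lambda,T}(x)=\min_{\tau(l)}\sum_kp^k\,\mathbb E[\sum_{s=1}^T\lambda(1-\lambda)^{s-1}M(k,l,a_s,b_s)\mid k,l]$, the minimum over behavior strategies of player 2 of type $l$; for $y\in Y_T(q)$ with strategy $\tau$, $w_{k,0;\lambda,T}(y)=\max_{\sigma(k)}\sum_lq^l\,\mathbb E[\sum_{s=1}^T\lambda(1-\lambda)^{s-1}M(k,l,a_s,b_s)\mid k,l]$. *)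

From mathcomp Require Import all_boot all_order all_algebra.
From mathcomp Require Import classical_sets reals.
Set Implicit Arguments. Unset Strict Implicit. Unset Printing Implicit Defensive.
Import Order.TTheory GRing.Theory Num.Theory.
Local Open Scope ring_scope.
Local Open Scope classical_set_scope.

(* Conventions.
   - A history pair (h^A,h^B) of stage t is a pair of sequences of equal
     length t-1 (first action first); extensions by [rcons].
   - A behavior strategy of player 1 is sigma : K -> seq A -> seq B -> A -> R;
     only its values at equal-length histories of length < T matter.
   - Realization plans / LP variables are functions on all histories; only
     the values at the relevant histories are constrained / used. *)

Section Game.
Variables (R : realType) (K L A B : finType) (M : K -> L -> A -> B -> R)
  (p : K -> R) (q : L -> R) (lam : R) (T : nat).

Definition behav (X : finType) (s : seq A -> seq B -> X -> R) : Prop :=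
  forall hA hB, size hA = size hB -> (size hA < T)%N ->
    (forall x, 0 <= s hA hB x) /\ \sum_x s hA hB x = 1.

Definition strat1_ok (sigma : K -> seq A -> seq B -> A -> R) :=
  forall k, behav (sigma k).
Definition strat2_ok (tau : L -> seq A -> seq B -> B -> R) :=
  forall l, behav (tau l).

(* cont sigma tau k l hA hB n = conditional expected discounted payoff
   (given types k,l and history (hA,hB)) accumulated over the next n stages;
   stage t = size hA + 1 has weight lam (1-lam)^(t-1). *)
Fixpoint cont (sigma : K -> seq A -> seq B -> A -> R)
  (tau : L -> seq A -> seq B -> B -> R) (k : K) (l : L)
  (hA : seq A) (hB : seq B) (n : nat) : R :=
  if n is n'.+1 then
    \sum_a \sum_b sigma k hA hB a * tau l hA hB b *
      (lam * (1 - lam) ^+ size hA * M k l a b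
       + cont sigma tau k l (rcons hA a) (rcons hB b) n')
  else 0.

Definition payoff sigma tau : R :=
  \sum_k \sum_l p k * q l * cont sigma tau k l [::] [::] T.

Definition value : R :=
  sup [set v | exists2 s, strat1_ok s &
         v = inf [set w | exists2 t, strat2_ok t & w = payoff s t]].

Definition security1 sigma :=
  strat1_ok sigma /\ forall tau, strat2_ok tau -> value <= payoff sigma tau.
Definition security2 tau :=
  strat2_ok tau /\ forall sigma, strat1_ok sigma -> payoff sigma tau <= value.

Definition rplan1 (sigma : K -> seq A -> seq B -> A -> R)
  (x : K -> seq A -> seq B -> A -> R) :=
  forall k hA hB a, size hA = size hB -> (size hA < T)%N ->
    x k hA hB a = p k *
      (\prod_(s < size hA) sigma k (take s hA) (take s hB) (nth a hA s)) *
      sigma k hA hB a.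
Definition rplan2 (tau : L -> seq A -> seq B -> B -> R)
  (y : L -> seq A -> seq B -> B -> R) :=
  forall l hA hB b, size hA = size hB -> (size hA < T)%N ->
    y l hA hB b = q l *
      (\prod_(s < size hB) tau l (take s hA) (take s hB) (nth b hB s)) *
      tau l hA hB b.

Definition inX (x : K -> seq A -> seq B -> A -> R) :=
  [/\ (forall k hA hB a, size hA = size hB -> (size hA < T)%N ->
         0 <= x k hA hB a),
      (forall k, \sum_a x k [::] [::] a = p k) &
      (forall k hA hB a b, size hA = size hB -> ((size hA).+1 < T)%N ->
         \sum_a' x k (rcons hA a) (rcons hB b) a' = x k hA hB a)].
Definition inY (y : L -> seq A -> seq B -> B -> R) :=
  [/\ (forall l hA hB b, size hA = size hB -> (size hA < T)%N ->
         0 <= y l hA hB b),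
      (forall l, \sum_b y l [::] [::] b = q l) &
      (forall l hA hB a b, size hA = size hB -> ((size hA).+1 < T)%N ->
         \sum_b' y l (rcons hA a) (rcons hB b) b' = y l hA hB b)].

(* strategy determined by a realization plan via ratios (arbitrary, here
   uniform, at histories of zero probability) *)
Definition sigma_of (x : K -> seq A -> seq B -> A -> R) k hA hB a : R :=
  let d := \sum_a' x k hA hB a' in
  if d == 0 then #|A|%:R^-1 else x k hA hB a / d.
Definition tau_of (y : L -> seq A -> seq B -> B -> R) l hA hB b : R :=
  let d := \sum_b' y l hA hB b' in
  if d == 0 then #|B|%:R^-1 else y l hA hB b / d.

Definition u_sec (x : K -> seq A -> seq B -> A -> R) (l : L) : R :=
  inf [set v | exists2 t : seq A -> seq B -> B -> R, behav t &
        v = \sum_k p k * cont (sigma_of x) (fun _ => t) k l [::] [::] T].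
Definition w_sec (y : L -> seq A -> seq B -> B -> R) (k : K) : R :=
  sup [set v | exists2 s : seq A -> seq B -> A -> R, behav s &
        v = \sum_l q l * cont (fun _ => s) (tau_of y) k l [::] [::] T].

(* the primal LP: variables x, u0 (= u_{:,0}), U (= matrices u_{l,hA,hB}) *)
Definition primal_feas (x : K -> seq A -> seq B -> A -> R) (u0 : L -> R)
  (U : L -> seq A -> seq B -> A -> B -> R) :=
  [/\ inX x,
      (forall l hA hB a b, size hA = size hB -> size hA = T.-1 ->
         U l hA hB a b = 0),
      (forall l b', lam * (\sum_k \sum_a' M k l a' b' * x k [::] [::] a')
                    + (1 - lam) * (\sum_a' U l [::] [::] a' b') >= u0 l) &
      (forall l hA hB a b b', size hA = size hB -> ((size hA).+1 < T)%N ->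
         lam * (\sum_k \sum_a' M k l a' b' * x k (rcons hA a) (rcons hB b) a')
         + (1 - lam) * (\sum_a' U l (rcons hA a) (rcons hB b) a' b')
         >= U l hA hB a b)].
Definition primal_obj (u0 : L -> R) : R := \sum_l q l * u0 l.

(* the dual LP: variables y, w0 (= w_{:,0}), W (= matrices w_{k,hA,hB}) *)
Definition dual_feas (y : L -> seq A -> seq B -> B -> R) (w0 : K -> R)
  (W : K -> seq A -> seq B -> A -> B -> R) :=
  [/\ inY y,
      (forall k hA hB a b, size hA = size hB -> size hA = T.-1 ->
         W k hA hB a b = 0),
      (forall k a', lam * (\sum_l \sum_b' M k l a' b' * y l [::] [::] b')
                    + (1 - lam) * (\sum_b' W k [::] [::] a' b') <= w0 k) &
      (forall k hA hB a b a', size hA = size hB -> ((size hA).+1 < T)%N ->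
         lam * (\sum_l \sum_b' M k l a' b' * y l (rcons hA a) (rcons hB b) b')
         + (1 - lam) * (\sum_b' W k (rcons hA a) (rcons hB b) a' b')
         <= W k hA hB a b)].
Definition dual_obj (w0 : K -> R) : R := \sum_k p k * w0 k.

End Game.

From mathcomp Require Import all_boot all_order all_algebra.
From mathcomp Require Import classical_sets reals.
From mathcomp Require Import ring lra zify.
Set Implicit Arguments. Unset Strict Implicit. Unset Printing Implicit Defensive.
Import Order.TTheory GRing.Theory Num.Theory.
Local Open Scope ring_scope.
Local Open Scope classical_set_scope.

(* The game is finite, so the minimax theorem for its normal form, obtained
   here from Farkas' lemma (by Fourier-Motzkin elimination), gives optimal
   mixtures of pure strategies for both players. Against a fixed strategy of
   player 2 the payoff is linear in the realization plan of player 1, so the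
   average of the realization plans of an optimal mixture is a realization
   plan guaranteeing the value, and symmetrically for player 2.
   For a fixed plan x, the constraints of the primal program say, stage by
   stage from the last one, that u_l is at most the payoff of any strategy of
   type l against x, and the best reply computed by backward induction gives a
   feasible u with equality. Hence the optimum over (u, U) is the weighted
   security payoff of x, and the optimum over x is the value. The dual program
   is the primal program of the game with the roles of the players exchanged
   and the payoff negated. *)

Section Farkas.
Variable R : realFieldType.

Lemma sum_delta_mull (C : finType) (c : C) (F : C -> R) :
  \sum_e (e == c)%:R * F e = F c.
Proof.
rewrite (bigD1 c) //= eqxx mul1r big1 ?addr0 // => e /negbTE ->.
by rewrite mul0r.
Qed.

Lemma sum_comb_mull (I C : finType) (w : I -> R) (f : I -> C -> R) (g : C -> R) :
  \sum_e (\sum_i w i * f i e) * g e = \sum_i w i * \sum_e f i e * g e.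
Proof.
under eq_bigr do rewrite mulr_suml.
rewrite exchange_big; apply: eq_bigr => i _ /=.
by rewrite mulr_sumr; apply: eq_bigr => e _; rewrite mulrA.
Qed.

Definition lin_feasible (V C : finType) (a : C -> V -> R) (b : C -> R) :=
  exists z : V -> R, forall c, b c <= \sum_v a c v * z v.

Definition infeasible_cert (V C : finType) (a : C -> V -> R) (b : C -> R) :=
  exists w : C -> R, [/\ forall c, 0 <= w c,
    forall v, \sum_c w c * a c v = 0 & 0 < \sum_c w c * b c].

Section FourierMotzkin.
Variables (n : nat) (C : finType) (a : C -> 'I_n.+1 -> R) (b : C -> R).

(* The constraints of the system with the last variable eliminated: one
   positive combination of each pair of constraints whose last coefficients
   have opposite signs, and every constraint in which it does not occur. *)
Definition fm_weight (c' : (C * C) + C) (e : C) : R :=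
  match c' with
  | inl (c, d) => if (0 < a c ord_max) && (a d ord_max < 0)
                  then (e == c)%:R * - a d ord_max + (e == d)%:R * a c ord_max
                  else 0
  | inr c => if a c ord_max == 0 then (e == c)%:R else 0
  end.

Definition fm_a c' (i : 'I_n) := \sum_e fm_weight c' e * a e (lift ord_max i).
Definition fm_b c' := \sum_e fm_weight c' e * b e.

Lemma fm_weight_ge0 c' e : 0 <= fm_weight c' e.
Proof.
case: c' => [[c d]|c] /=; last by case: ifP; rewrite ?ler0n.
case: ifP => // /andP[c_gt0 d_lt0].
by rewrite addr_ge0 // mulr_ge0 ?ler0n ?oppr_ge0 ?ltW.
Qed.

Lemma fm_weight_pairE c d (F : C -> R) :
  0 < a c ord_max -> a d ord_max < 0 ->
  \sum_e fm_weight (inl (c, d)) e * F e = - a d ord_max * F c + a c ord_max * F d.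
Proof.
move=> c_gt0 d_lt0; rewrite /= c_gt0 d_lt0 /=.
under eq_bigr do rewrite mulrDl -!mulrA.
by rewrite big_split /= !sum_delta_mull.
Qed.

Lemma fm_weight_last c' : \sum_e fm_weight c' e * a e ord_max = 0.
Proof.
case: c' => [[c d]|c].
  have [/andP[c_gt0 d_lt0]|sgn] := boolP ((0 < a c ord_max) && (a d ord_max < 0)).
    by rewrite fm_weight_pairE //; ring.
  by rewrite big1 // => e _; rewrite /= (negbTE sgn) mul0r.
rewrite /=; case: eqP => [c0|_]; first by rewrite sum_delta_mull.
by rewrite big1 // => e _; rewrite mul0r.
Qed.

Lemma fm_cert_lift : infeasible_cert fm_a fm_b -> infeasible_cert a b.
Proof.
move=> [w [w_ge0 w_a w_b]].
exists (fun e => \sum_c' w c' * fm_weight c' e); split.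
- by move=> e; apply: sumr_ge0 => c' _; rewrite mulr_ge0 ?fm_weight_ge0.
- move=> i; rewrite sum_comb_mull.
  case: (unliftP ord_max i) => [j ->|->]; first exact: w_a.
  by rewrite big1 // => c' _; rewrite fm_weight_last mulr0.
- by rewrite sum_comb_mull.
Qed.

Section Extension.
Variables (z : 'I_n -> R) (z_feas : forall c', fm_b c' <= \sum_i fm_a c' i * z i).

Let rest c := \sum_i a c (lift ord_max i) * z i.
Let bound c := (b c - rest c) / a c ord_max.

Lemma fm_bound_pair c d :
  0 < a c ord_max -> a d ord_max < 0 -> bound c <= bound d.
Proof.
move=> c_gt0 d_lt0; have := z_feas (inl (c, d)).
rewrite /fm_b fm_weight_pairE // /fm_a.
rewrite (eq_bigr (fun i => \sum_e fm_weight (inl (c, d)) e * (a e (lift ord_max i) * z i)));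
  last by move=> i _; rewrite mulr_suml; apply: eq_bigr => e _; rewrite mulrA.
rewrite exchange_big /=.
under eq_bigr do rewrite -mulr_sumr.
rewrite fm_weight_pairE // -/(rest c) -/(rest d) => z_cd.
rewrite /bound ler_pdivrMr // mulrC mulrA ler_ndivlMr //.
rewrite -subr_ge0 -(subr_ge0 _ (_ * _)) in z_cd *.
by move: z_cd; congr (0 <= _); ring.
Qed.

Lemma fm_solution_extend : lin_feasible a b.
Proof.
(* Any value between the lower bounds of the constraints with a positive last
   coefficient and the upper bounds of those with a negative one will do. *)
pose t0 := \big[Num.max/0]_(c | 0 < a c ord_max) bound c.
pose t := \big[Num.min/t0]_(d | a d ord_max < 0) bound d.
exists (fun i => if unlift ord_max i is Some j then z j else t) => c.
rewrite (bigD1_ord ord_max) //= unlift_none.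
under eq_bigr do rewrite liftK.
rewrite -/(rest c) addrC.
case: (ltrgt0P (a c ord_max)) => sgn.
- have : bound c <= t.
    apply: le_bigmin => [|d d_lt0]; last exact: fm_bound_pair.
    exact: le_bigmax_cond.
  by rewrite -(ler_pM2l sgn) /bound [X in X <= _]mulrC divfK ?gt_eqF //; lra.
- have : t <= bound c by exact: bigmin_le_cond.
  by rewrite -(ler_nM2l sgn) /bound [X in X <= _]mulrC divfK ?lt_eqF //; lra.
- have := z_feas (inr c); rewrite /fm_b /fm_a /= sgn eqxx !sum_delta_mull.
  under eq_bigr do rewrite sum_delta_mull.
  by rewrite mul0r addr0.
Qed.

End Extension.

End FourierMotzkin.

Lemma farkas_ord n (C : finType) (a : C -> 'I_n -> R) (b : C -> R) :
  lin_feasible a b \/ infeasible_cert a b.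
Proof.
elim: n C a b => [|n IH] C a b.
  have [b_le0|] := boolP [forall c, b c <= 0].
    by left; exists (fun _ => 0) => c; rewrite big_ord0; exact: (forallP b_le0).
  rewrite negb_forall => /existsP[c b_gt0]; right.
  exists (fun e => (e == c)%:R); split; [by move=> e; rewrite ler0n | by case |].
  by rewrite sum_delta_mull ltNge.
case: (IH _ (fm_a a) (fm_b a b)) => [[z z_feas]|cert].
  by left; exact: fm_solution_extend z_feas.
by right; exact: fm_cert_lift.
Qed.

Lemma farkas (V C : finType) (a : C -> V -> R) (b : C -> R) :
  lin_feasible a b \/ infeasible_cert a b.
Proof.
have reindex (F : V -> R) : \sum_v F v = \sum_(k < #|V|) F (enum_val k).
  by rewrite -(big_enum_val F); apply: eq_bigl => v; rewrite inE.
case: (farkas_ord (fun c (k : 'I_#|V|) => a c (enum_val k)) b)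
  => [[z z_feas]|[w [w_ge0 w_a w_b]]].
  left; exists (fun v => z (enum_rank v)) => c; rewrite reindex.
  by under eq_bigr do rewrite enum_valK; exact: z_feas.
by right; exists w; split => // v; rewrite -(enum_rankK v); exact: w_a.
Qed.

End Farkas.

Section Ville.
Variable R : realFieldType.

Definition is_dist (I : finType) (mu : I -> R) :=
  (forall i, 0 <= mu i) /\ \sum_i mu i = 1.

Lemma is_dist_delta (I : finType) (i0 : I) : is_dist (fun i => (i == i0)%:R).
Proof.
split=> [i|]; first by rewrite ler0n.
by rewrite -[RHS](sum_delta_mull i0 (fun=> 1)); apply: eq_bigr => i _; rewrite mulr1.
Qed.

Lemma is_dist_normalize (I : finType) (f : I -> R) :
  (forall i, 0 <= f i) -> 0 < \sum_i f i -> is_dist (fun i => f i / \sum_i f i).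
Proof.
move=> f_ge0 sum_gt0; split=> [i|]; first by rewrite divr_ge0 // ltW.
by rewrite -mulr_suml divff // gt_eqF.
Qed.

Lemma dist_avg_le (I : finType) (mu X : I -> R) v :
  is_dist mu -> (forall i, X i <= v) -> \sum_i mu i * X i <= v.
Proof.
move=> [mu_ge0 mu_sum] X_le; apply: le_trans (_ : \sum_i mu i * v <= v).
  by apply: ler_sum => i _; apply: ler_wpM2l.
by rewrite -mulr_suml mu_sum mul1r.
Qed.

Lemma dist_avg_ge (I : finType) (mu X : I -> R) v :
  is_dist mu -> (forall i, v <= X i) -> v <= \sum_i mu i * X i.
Proof.
move=> dmu X_ge; rewrite -lerN2 -sumrN.
under eq_bigr do rewrite -mulrN.
by apply: dist_avg_le => // i; rewrite lerN2.
Qed.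

Lemma ville (I J : finType) (j0 : J) (G : I -> J -> R) :
  (exists mu, is_dist mu /\ forall j, 0 < \sum_i mu i * G i j) \/
  (exists nu, is_dist nu /\ forall i, \sum_j G i j * nu j <= 0).
Proof.
pose a (c : I + J) (v : I) : R :=
  match c with inl i => (v == i)%:R | inr j => G v j end.
pose b (c : I + J) : R := if c is inr j then 1 else 0.
case: (farkas a b) => [[z z_feas]|[w [w_ge0 w_a w_b]]].
  have z_ge0 i : 0 <= z i by have := z_feas (inl i); rewrite /= sum_delta_mull.
  have zG j : 1 <= \sum_i z i * G i j.
    by have := z_feas (inr j); under eq_bigr do rewrite mulrC.
  have z_sum : 0 < \sum_i z i.
    rewrite lt_def sumr_ge0 // andbT; apply/eqP => /psumr_eq0P z0.
    have := zG j0; rewrite big1 ?ler10 // => i _.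
    by rewrite z0 ?mul0r.
  left; exists (fun i => z i / \sum_i z i); split; first exact: is_dist_normalize.
  move=> j; under eq_bigr do rewrite mulrAC.
  by rewrite -mulr_suml divr_gt0 // (lt_le_trans ltr01).
have w_sum : 0 < \sum_j w (inr j).
  by move: w_b; rewrite big_sumType /= big1 ?add0r => [|i _]; 
    [under eq_bigr do rewrite mulr1 | rewrite mulr0].
right; exists (fun j => w (inr j) / \sum_j w (inr j)); split.
  exact: is_dist_normalize.
move=> i; under eq_bigr do rewrite mulrA.
rewrite -mulr_suml pmulr_lle0 ?invr_gt0 //.
have := w_a i; rewrite big_sumType /=.
under [X in X + _ = _]eq_bigr do rewrite mulrC eq_sym.
rewrite sum_delta_mull addrC => /eqP; rewrite addr_eq0 => /eqP w_inr.
by under eq_bigr do rewrite mulrC; rewrite w_inr oppr_le0.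
Qed.

End Ville.

Section Minimax.
Variables (R : realType) (I J : finType) (i0 : I) (j0 : J) (G : I -> J -> R).

Definition upper_vals := [set v | exists nu, is_dist nu /\ forall i, \sum_j G i j * nu j <= v].

Lemma upper_vals_lbound : has_lbound upper_vals.
Proof.
exists (\big[Num.min/G i0 j0]_j G i0 j) => v [nu [dnu nu_le]].
apply: le_trans _ (nu_le i0).
under [X in _ <= X]eq_bigr do rewrite mulrC.
by apply: dist_avg_ge => // j; exact: bigmin_le.
Qed.

Lemma upper_vals_nonempty : upper_vals !=set0.
Proof.
exists (\big[Num.max/G i0 j0]_i G i j0), (fun j => (j == j0)%:R).
split=> [|i]; first exact: is_dist_delta.
under eq_bigr do rewrite mulrC; rewrite sum_delta_mull; exact: le_bigmax.
Qed.

(* If no mixture of player 2 guaranteed [inf upper_vals], Ville's theorem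
   would give a mixture of player 1 securing strictly more. *)
Lemma upper_vals_inf : upper_vals (inf upper_vals).
Proof.
set v := inf upper_vals.
case: (ville j0 (fun i j => G i j - v)) => [[mu [dmu mu_gt]]|[nu [dnu nu_le]]].
  pose g j := \sum_i mu i * G i j.
  have v_lt : v < \big[Num.min/g j0]_j g j.
    have g_gt j : v < g j.
      move: (mu_gt j); under eq_bigr do rewrite mulrBr.
      by rewrite sumrB -mulr_suml dmu.2 mul1r subr_gt0.
    by apply: lt_bigmin.
  suff : \big[Num.min/g j0]_j g j <= v by rewrite leNgt v_lt.
  apply: lb_le_inf; first exact: upper_vals_nonempty.
  move=> w [nu [dnu nu_le]].
  apply: le_trans (dist_avg_le (X := fun i => \sum_j G i j * nu j) dmu nu_le).
  rewrite -sum_comb_mull.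
  under [X in _ <= X]eq_bigr do rewrite mulrC.
  by apply: dist_avg_ge => // j; exact: bigmin_le.
exists nu; split=> // i; move: (nu_le i); under eq_bigr do rewrite mulrBl.
by rewrite sumrB -mulr_sumr dnu.2 mulr1 subr_le0.
Qed.

Theorem minimax : exists v mu nu, [/\ is_dist mu, is_dist nu,
  (forall j, v <= \sum_i mu i * G i j) & (forall i, \sum_j G i j * nu j <= v)].
Proof.
have [nu [dnu nu_le]] := upper_vals_inf; set v := inf upper_vals in nu_le.
case: (ville i0 (fun j i => v - G i j)) => [[mu [dmu mu_gt]]|[mu [dmu mu_le]]].
  pose h i := \sum_j G i j * mu j.
  have h_lt i : h i < v.
    move: (mu_gt i); under eq_bigr do rewrite mulrBr.
    rewrite sumrB -mulr_suml dmu.2 mul1r subr_gt0.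
    by under eq_bigr do rewrite mulrC.
  have : v <= \big[Num.max/h i0]_i h i.
    by apply: ge_inf upper_vals_lbound _ _; exists mu; split=> // i; exact: le_bigmax.
  by rewrite leNgt bigmax_lt.
exists v, mu, nu; split=> // j; move: (mu_le j); under eq_bigr do rewrite mulrBl.
rewrite sumrB -mulr_sumr dmu.2 mulr1 subr_le0.
by under eq_bigr do rewrite mulrC.
Qed.

End Minimax.

Lemma wsum_ler_eq (R : numDomainType) (I : finType) (w f g : I -> R) :
  (forall i, 0 < w i) -> (forall i, f i <= g i) ->
  \sum_i w i * g i <= \sum_i w i * f i -> forall i, f i = g i.
Proof.
move=> w_gt0 f_le sum_le i.
have terms_ge0 j : 0 <= w j * (g j - f j).
  by apply: mulr_ge0; [exact: ltW | rewrite subr_ge0].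
have sum0 : \sum_j w j * (g j - f j) = 0.
  apply/eqP; rewrite eq_le (sumr_ge0 _ (fun j _ => terms_ge0 j)) andbT.
  by under eq_bigr do rewrite mulrBr; rewrite sumrB subr_le0.
have /(_ i isT)/eqP := psumr_eq0P (fun j _ => terms_ge0 j) sum0.
by rewrite mulf_eq0 gt_eqF //= subr_eq0 => /eqP.
Qed.

Definition pure_behav (A B : Type) (X : eqType) (R : nzSemiRingType)
  (g : seq A -> seq B -> X) (hA : seq A) (hB : seq B) (x : X) : R :=
  (g hA hB == x)%:R.

Lemma pure_behav_ok (R : realType) (A B X : finType) T (g : seq A -> seq B -> X) :
  behav T (pure_behav R g).
Proof.
move=> hA hB _ _; split=> [x|]; first by rewrite ler0n.
rewrite /pure_behav (bigD1 (g hA hB)) //= eqxx big1 ?addr0 // => x.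
by rewrite eq_sym => /negbTE ->.
Qed.

Section ContPlan.
Variables (R : realType) (K L A B : finType) (M : K -> L -> A -> B -> R)
  (p : K -> R) (q : L -> R) (lam : R) (T : nat).

Local Notation plan1 := (K -> seq A -> seq B -> A -> R).

Definition reach (x : plan1) k hA hB := \sum_a x k hA hB a.

Definition plan_compatible (sigma x : plan1) :=
  forall k hA hB a, size hA = size hB -> (size hA < T)%N ->
    x k hA hB a = reach x k hA hB * sigma k hA hB a.

Fixpoint cont_plan (x : plan1) (t : seq A -> seq B -> B -> R) l hA hB n : R :=
  if n is n'.+1 then
    \sum_b t hA hB b *
      (\sum_k \sum_a x k hA hB a * (lam * (1 - lam) ^+ size hA * M k l a b)
       + \sum_a cont_plan x t l (rcons hA a) (rcons hB b) n')
  else 0.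

Lemma cont_fix_type sigma tau k l hA hB n :
  cont M lam sigma tau k l hA hB n = cont M lam sigma (fun=> tau l) k l hA hB n.
Proof.
elim: n hA hB => [//|n IH] hA hB /=.
by apply: eq_bigr => a _; apply: eq_bigr => b _; rewrite IH.
Qed.

Lemma cont_planE x sigma t l : inX p T x -> plan_compatible sigma x ->
  forall n hA hB, size hA = size hB -> (size hA + n = T)%N ->
  cont_plan x t l hA hB n =
  \sum_k reach x k hA hB * cont M lam sigma (fun=> t) k l hA hB n.
Proof.
move=> [_ _ x_next] x_sigma; elim=> [|n IH] hA hB hs hT /=.
  by rewrite big1 // => k _; rewrite mulr0.
have child a b : cont_plan x t l (rcons hA a) (rcons hB b) n =
    \sum_k x k hA hB a * cont M lam sigma (fun=> t) k l (rcons hA a) (rcons hB b) n.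
  case: n IH hT => [|n] IH hT; first by rewrite /= big1 // => k _; rewrite mulr0.
  rewrite IH ?size_rcons ?hs //; last by lia.
  by apply: eq_bigr => k _; rewrite /reach x_next //; lia.
under eq_bigr => b _ do under [X in _ + X]eq_bigr => a _ do rewrite child.
pose F k a b := t hA hB b * (x k hA hB a * (lam * (1 - lam) ^+ size hA * M k l a b
   + cont M lam sigma (fun=> t) k l (rcons hA a) (rcons hB b) n)).
transitivity (\sum_b \sum_k \sum_a F k a b).
  apply: eq_bigr => b _.
  rewrite [X in _ + X]exchange_big /= -big_split /= mulr_sumr.
  apply: eq_bigr => k _; rewrite -big_split /= mulr_sumr.
  by apply: eq_bigr => a _; rewrite /F; ring.
rewrite exchange_big /=; apply: eq_bigr => k _.
rewrite exchange_big /= mulr_sumr; apply: eq_bigr => a _.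
rewrite mulr_sumr; apply: eq_bigr => b _.
by rewrite /F (x_sigma _ _ _ _ hs) //; [ring | lia].
Qed.

Lemma reach_nil x k : inX p T x -> reach x k [::] [::] = p k.
Proof. by case=> _ + _; apply. Qed.

Lemma payoff_cont_plan x sigma tau : inX p T x -> plan_compatible sigma x ->
  payoff M p q lam T sigma tau = \sum_l q l * cont_plan x (tau l) l [::] [::] T.
Proof.
move=> x_in x_sigma; rewrite /payoff exchange_big /=; apply: eq_bigr => l _.
rewrite (cont_planE (tau l) l x_in x_sigma) // mulr_sumr; apply: eq_bigr => k _.
by rewrite reach_nil // (cont_fix_type sigma tau); ring.
Qed.

Definition mix_plan (I : finType) (mu : I -> R) (xs : I -> plan1) : plan1 :=
  fun k hA hB a => \sum_i mu i * xs i k hA hB a.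

Lemma cont_plan_mix (I : finType) (mu : I -> R) (xs : I -> plan1) t l n hA hB :
  cont_plan (mix_plan mu xs) t l hA hB n =
  \sum_i mu i * cont_plan (xs i) t l hA hB n.
Proof.
elim: n hA hB => [|n IH] hA hB /=; first by rewrite big1 // => i _; rewrite mulr0.
under eq_bigr => b _ do under [X in _ + X]eq_bigr => a _ do rewrite IH.
under [RHS]eq_bigr do rewrite mulr_sumr.
rewrite [RHS]exchange_big /=; apply: eq_bigr => b _.
under [RHS]eq_bigr do rewrite mulrCA; rewrite -mulr_sumr; congr (_ * _).
under [RHS]eq_bigr do rewrite mulrDr; rewrite big_split /=; congr (_ + _).
  under eq_bigr do under eq_bigr do rewrite mulr_suml.
  under eq_bigr do rewrite exchange_big /=.
  rewrite exchange_big /=; apply: eq_bigr => i _.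
  rewrite mulr_sumr; apply: eq_bigr => k _; rewrite mulr_sumr.
  by apply: eq_bigr => a _; rewrite !mulrA.
by rewrite exchange_big /=; apply: eq_bigr => a _; rewrite mulr_sumr.
Qed.

Lemma eq_cont_plan x t t' l :
  (forall hA hB b, size hA = size hB -> (size hA < T)%N -> t hA hB b = t' hA hB b) ->
  forall n hA hB, size hA = size hB -> (size hA + n = T)%N ->
  cont_plan x t l hA hB n = cont_plan x t' l hA hB n.
Proof.
move=> tt'; elim=> [//|n IH] hA hB hs hT /=.
apply: eq_bigr => b _; rewrite tt' //; last by lia.
congr (_ * (_ + _)); apply: eq_bigr => a _.
by apply: IH; rewrite ?size_rcons ?hs //; lia.
Qed.

Section PrimalBound.
Variables (x : plan1) (u0 : L -> R) (U : L -> seq A -> seq B -> A -> B -> R).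
Hypotheses (feas : primal_feas M p lam T x u0 U) (lam_ge0 : 0 <= lam) (lam_le1 : lam <= 1).

Definition lp_row l hA hB b :=
  lam * (\sum_k \sum_a M k l a b * x k hA hB a) + (1 - lam) * \sum_a U l hA hB a b.

Lemma cont_plan_ge_lp_row t l : behav T t ->
  forall n hA hB, size hA = size hB -> (size hA + n.+1 = T)%N ->
  (1 - lam) ^+ size hA * \sum_b t hA hB b * lp_row l hA hB b <= cont_plan x t l hA hB n.+1.
Proof.
case: feas => _ U_last _ U_next t_ok; elim=> [|n IH] hA hB hs hT.
  rewrite /= mulr_sumr; apply: ler_sum => b _; rewrite big1_eq addr0.
  have [t_ge0 _] := t_ok hA hB hs (ltac:(lia)).
  rewrite mulrCA; apply: ler_wpM2l => //; rewrite le_eqVlt; apply/predU1P; left.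
  have U0 : \sum_a U l hA hB a b = 0 by apply: big1 => a _; apply: U_last => //; lia.
  rewrite /lp_row U0 mulr0 addr0.
  rewrite mulrA mulr_sumr; apply: eq_bigr => k _.
  by rewrite mulr_sumr; apply: eq_bigr => a _; ring.
have child a b : (1 - lam) ^+ (size hA).+1 * U l hA hB a b <=
                 cont_plan x t l (rcons hA a) (rcons hB b) n.+1.
  have hs' : size (rcons hA a) = size (rcons hB b) by rewrite !size_rcons hs.
  apply: le_trans (IH _ _ hs' _); last by rewrite size_rcons; lia.
  rewrite size_rcons; apply: ler_wpM2l; first by rewrite exprn_ge0 // subr_ge0.
  have [t_ge0 t_sum] := t_ok (rcons hA a) (rcons hB b) hs' (ltac:(rewrite size_rcons; lia)).
  apply: dist_avg_ge => [//|b']; apply: U_next => //; lia.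
rewrite [cont_plan _ _ _ _ _ _.+1]/= mulr_sumr; apply: ler_sum => b _.
have [t_ge0 _] := t_ok hA hB hs (ltac:(lia)).
rewrite mulrCA; apply: ler_wpM2l => //.
rewrite /lp_row mulrDr; apply: lerD; last first.
  rewrite mulrA -exprSr mulr_sumr; apply: ler_sum => a _; exact: child.
rewrite le_eqVlt; apply/predU1P; left; rewrite mulrA mulr_sumr; apply: eq_bigr => k _.
by rewrite mulr_sumr; apply: eq_bigr => a _; ring.
Qed.

Lemma primal_feas_le_cont_plan t l : (1 <= T)%N -> behav T t ->
  u0 l <= cont_plan x t l [::] [::] T.
Proof.
move=> T_gt0 t_ok; have [_ _ u0_le _] := feas.
have := @cont_plan_ge_lp_row t l t_ok T.-1 [::] [::] erefl.
rewrite prednK // => /(_ erefl); apply: le_trans.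
rewrite expr0 mul1r; apply: dist_avg_ge => [|b]; [exact: t_ok | exact: u0_le].
Qed.

End PrimalBound.
End ContPlan.

Section BestReply.
Variables (R : realType) (K L A B : finType) (M : K -> L -> A -> B -> R)
  (p : K -> R) (lam : R) (T : nat).

Local Notation plan1 := (K -> seq A -> seq B -> A -> R).

Section Reply.
Variables (b0 : B) (x : plan1) (l : L).

Definition reply_val (V : seq A -> seq B -> R) hA hB b :=
  lam * (\sum_k \sum_a M k l a b * x k hA hB a)
  + (1 - lam) * \sum_a V (rcons hA a) (rcons hB b).

Definition reply_move V hA hB : B := Order.arg_min b0 xpredT (reply_val V hA hB).

(* The value of the best reply of type [l] with [n] stages to go, computed by
   backward induction and normalized by the discount of the current stage. *)
Fixpoint br_val n hA hB : R :=
  if n is n'.+1 then reply_val (br_val n') hA hB (reply_move (br_val n') hA hB)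
  else 0.

Definition br_move hA hB := reply_move (br_val (T - (size hA).+1)) hA hB.
Definition br_strat := pure_behav R br_move.

Lemma br_val_le n hA hB b : br_val n.+1 hA hB <= reply_val (br_val n) hA hB b.
Proof. by rewrite /= /reply_move; case: arg_minP => // b1 _; apply. Qed.

Lemma cont_plan_br n hA hB : size hA = size hB -> (size hA + n = T)%N ->
  cont_plan M lam x br_strat l hA hB n = (1 - lam) ^+ size hA * br_val n hA hB.
Proof.
elim: n hA hB => [|n IH] hA hB hs hT /=; first by rewrite mulr0.
set g := reply_move (br_val n) hA hB.
have br_g b : br_strat hA hB b = (g == b)%:R.
  by rewrite /br_strat /pure_behav /br_move (_ : (T - (size hA).+1 = n)%N) //; lia.
rewrite (bigD1 g) //= [X in _ + X]big1 ?addr0 => [|b]; last first.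
  by rewrite br_g eq_sym => /negbTE ->; rewrite mul0r.
rewrite br_g eqxx mul1r /reply_val mulrDr; congr (_ + _).
  rewrite mulrA mulr_sumr; apply: eq_bigr => k _.
  by rewrite mulr_sumr; apply: eq_bigr => a _; ring.
rewrite mulrA -exprSr mulr_sumr; apply: eq_bigr => a _.
by rewrite IH ?size_rcons ?hs //; lia.
Qed.

End Reply.

Definition br_U b0 x l (hA : seq A) (hB : seq B) a b :=
  br_val b0 x l (T - (size hA).+1) (rcons hA a) (rcons hB b).
Definition br_u0 b0 x l := br_val b0 x l T [::] [::].

Lemma br_feasible b0 x : inX p T x -> (1 <= T)%N ->
  primal_feas M p lam T x (br_u0 b0 x) (br_U b0 x).
Proof.
move=> x_in T_gt0; split=> //.
- move=> l hA hB a b hs hT; rewrite /br_U.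
  by rewrite (_ : (T - (size hA).+1 = 0)%N) //; lia.
- move=> l b; have := br_val_le b0 x l (T - 1) [::] [::] b.
  by rewrite (_ : ((T - 1).+1 = T)%N) //; lia.
- move=> l hA hB a b b' hs hT.
  have := br_val_le b0 x l (T - (size hA).+2) (rcons hA a) (rcons hB b) b'.
  rewrite /br_U /reply_val size_rcons.
  by rewrite (_ : ((T - (size hA).+2).+1 = T - (size hA).+1)%N) //; lia.
Qed.

Lemma br_u0_cont_plan b0 x l :
  cont_plan M lam x (br_strat b0 x l) l [::] [::] T = br_u0 b0 x l.
Proof. by rewrite cont_plan_br // expr0 mul1r. Qed.

End BestReply.

Section RealizationPlans.
Variables (R : realType) (K A B : finType) (p : K -> R) (T : nat).

Local Notation plan1 := (K -> seq A -> seq B -> A -> R).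

Lemma prod_hist_rcons (f : seq A -> seq B -> A -> R) hA hB a b d :
  size hA = size hB ->
  \prod_(s < size (rcons hA a))
     f (take s (rcons hA a)) (take s (rcons hB b)) (nth d (rcons hA a) s) =
  (\prod_(s < size hA) f (take s hA) (take s hB) (nth d hA s)) * f hA hB a.
Proof.
move=> hs; rewrite size_rcons big_ord_recr /=; congr (_ * _).
  apply: eq_bigr => i _ /=; have i_le := ltnW (ltn_ord i).
  rewrite -!cats1 !takel_cat -?hs // nth_cat ltn_ord //.
by rewrite -!cats1 take_size_cat // take_size_cat -?hs // nth_cat ltnn subnn.
Qed.

Definition plan_of (sigma : plan1) : plan1 := fun k hA hB a =>
  p k * (\prod_(s < size hA) sigma k (take s hA) (take s hB) (nth a hA s)) * sigma k hA hB a.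

Section PlanOf.
Variables (sigma : plan1) (sigma_ok : strat1_ok T sigma).

Lemma reach_plan_of k hA hB d : size hA = size hB -> (size hA < T)%N ->
  reach (plan_of sigma) k hA hB =
  p k * \prod_(s < size hA) sigma k (take s hA) (take s hB) (nth d hA s).
Proof.
move=> hs hT; rewrite /reach /plan_of.
under eq_bigr => a _.
  rewrite (eq_bigr (fun s : 'I_(size hA) => sigma k (take s hA) (take s hB) (nth d hA s)));
    last by move=> s _; rewrite (set_nth_default d a (ltn_ord s)).
  over.
by rewrite -mulr_sumr (proj2 (sigma_ok k hs hT)) mulr1.
Qed.

Lemma plan_of_compatible : plan_compatible T sigma (plan_of sigma).
Proof. by move=> k hA hB a hs hT; rewrite (reach_plan_of k a hs hT). Qed.

Lemma inX_plan_of : (forall k, 0 <= p k) -> (0 < T)%N -> inX p T (plan_of sigma).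
Proof.
move=> p_ge0 T_gt0; split.
- move=> k hA hB a hs hT; rewrite /plan_of.
  rewrite mulr_ge0 ?(proj1 (sigma_ok k hs hT)) // mulr_ge0 //.
  apply: prodr_ge0 => s _; apply: (proj1 (sigma_ok _ _ _)).
  + by rewrite !size_take -hs ltn_ord.
  + by rewrite size_take ltn_ord; apply: ltn_trans hT.
- move=> k; rewrite /plan_of; under eq_bigr do rewrite big_ord0 mulr1.
  by rewrite -mulr_sumr (proj2 (@sigma_ok k [::] [::] erefl T_gt0)) mulr1.
- move=> k hA hB a b hs hT; rewrite -/(reach _ k _ _) (reach_plan_of k a); last 2 first.
  + by rewrite !size_rcons hs.
  + by rewrite size_rcons.
  by rewrite prod_hist_rcons // /plan_of mulrA.
Qed.

End PlanOf.

Section SigmaOf.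
Variables (x : plan1) (x_in : inX p T x).

Lemma sigma_of_compatible : plan_compatible T (sigma_of x) x.
Proof.
case: x_in => x_ge0 _ _ k hA hB a hs hT; rewrite /sigma_of /reach /=.
case: eqP => [sum0|/eqP sum_neq0]; last by rewrite mulrC divfK.
rewrite sum0 mul0r; apply: (psumr_eq0P _ sum0) => // a' _; exact: x_ge0.
Qed.

Lemma sigma_of_strat : (0 < #|A|)%N -> strat1_ok T (sigma_of x).
Proof.
case: x_in => x_ge0 _ _ A_gt0 k hA hB hs hT; rewrite /sigma_of /=.
case: eqP => [_|/eqP sum_neq0]; split.
- by move=> a; rewrite invr_ge0 ler0n.
- by rewrite sumr_const -(mulr_natr (#|A|%:R^-1)) mulVf // pnatr_eq0 -lt0n.
- by move=> a; rewrite divr_ge0 ?x_ge0 ?sumr_ge0 // => a' _; apply: x_ge0.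
- by rewrite -mulr_suml divff.
Qed.

Lemma reach_prod sigma k hA hB d : plan_compatible T sigma x ->
  size hA = size hB -> (size hA < T)%N ->
  reach x k hA hB = p k * \prod_(s < size hA) sigma k (take s hA) (take s hB) (nth d hA s).
Proof.
case: x_in => _ x_root x_next x_sigma.
elim/last_ind: hA hB => [|hA a IH] hB hs hT.
  by rewrite (size0nil (esym hs)) big_ord0 mulr1 /reach x_root.
case/lastP: hB hs => [|hB b hs']; first by rewrite size_rcons.
have hs : size hA = size hB by move: hs'; rewrite !size_rcons => -[].
rewrite size_rcons in hT.
rewrite /reach x_next // prod_hist_rcons // (x_sigma _ _ _ _ hs (ltnW hT)).
by rewrite (IH hB hs (ltnW hT)) mulrA.
Qed.

Lemma rplan1_sigma_of : rplan1 p T (sigma_of x) x.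
Proof.
move=> k hA hB a hs hT.
by rewrite sigma_of_compatible // (reach_prod k a sigma_of_compatible hs hT).
Qed.

End SigmaOf.

End RealizationPlans.

Definition flip_hist (I Y Z X V : Type) (f : I -> seq Y -> seq Z -> X -> V) :
  I -> seq Z -> seq Y -> X -> V := fun i hZ hY x => f i hY hZ x.

Lemma behav_flip (R : realType) (A B X : finType) T (s : seq A -> seq B -> X -> R) :
  behav T s -> behav T (fun hB hA x => s hA hB x).
Proof. by move=> s_ok hB hA hs hT; apply: s_ok (esym hs) _; rewrite -hs. Qed.

Lemma strat_flip (R : realType) (I A B X : finType) T
    (f : I -> seq A -> seq B -> X -> R) :
  (forall i, behav T (f i)) -> forall i, behav T (flip_hist f i).
Proof. by move=> f_ok i; apply: behav_flip. Qed.

Section Swap.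
Variables (R : realType) (K L A B : finType).

Definition swap_game (M : K -> L -> A -> B -> R) : L -> K -> B -> A -> R :=
  fun l k b a => - M k l a b.

Lemma cont_swap M lam sigma tau k l n hA hB : size hA = size hB ->
  cont M lam sigma tau k l hA hB n =
  - cont (swap_game M) lam (flip_hist tau) (flip_hist sigma) l k hB hA n.
Proof.
elim: n hA hB => [|n IH] hA hB hs /=; first by rewrite oppr0.
rewrite exchange_big /= -sumrN; apply: eq_bigr => b _.
rewrite -sumrN; apply: eq_bigr => a _.
by rewrite IH ?size_rcons ?hs // /flip_hist /swap_game; ring.
Qed.

Lemma payoff_swap M p q lam T sigma tau :
  payoff M p q lam T sigma tau =
  - payoff (swap_game M) q p lam T (flip_hist tau) (flip_hist sigma).
Proof.
rewrite /payoff exchange_big /= -sumrN; apply: eq_bigr => l _.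
by rewrite -sumrN; apply: eq_bigr => k _; rewrite cont_swap //; ring.
Qed.

Lemma inY_flip q T (y : L -> seq A -> seq B -> B -> R) :
  inY q T y <-> inX q T (flip_hist y).
Proof.
split=> [[y_ge0 y_root y_next]|[y_ge0 y_root y_next]]; split=> //.
- by move=> l hB hA b hs hT; apply: y_ge0 (esym hs) _; rewrite -hs.
- by move=> l hB hA b a hs hT; apply: y_next (esym hs) _; rewrite -hs.
- by move=> l hA hB b hs hT; apply: (y_ge0 l hB hA b (esym hs)); rewrite -hs.
- by move=> l hA hB a b hs hT; apply: (y_next l hB hA b a (esym hs)); rewrite -hs.
Qed.

Lemma rplan2_flip q T (tau y : L -> seq A -> seq B -> B -> R) :
  rplan2 q T tau y <-> rplan1 q T (flip_hist tau) (flip_hist y).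
Proof.
split=> tau_y l hA hB b hs hT.
- by rewrite /flip_hist tau_y // -hs.
- by apply: (tau_y l hB hA b (esym hs)); rewrite -hs.
Qed.

End Swap.

Section PureStrategies.
Variables (R : realType) (K A B X : finType) (T : nat).

(* Histories of length at most [T] are encoded in a finite type, so that pure
   strategies form a finite type. *)
Definition hist_code (Y : finType) (s : seq Y) : {ffun 'I_T -> option Y} :=
  [ffun i : 'I_T => nth None (map Some s) i].
Definition hist_decode (Y : finType) (f : {ffun 'I_T -> option Y}) : seq Y :=
  pmap id [seq f i | i <- enum 'I_T].

Lemma hist_codeK (Y : finType) (s : seq Y) : (size s <= T)%N -> hist_decode (hist_code s) = s.
Proof.
move=> s_le; rewrite /hist_decode.
have -> : [seq hist_code s i | i <- enum 'I_T] = map (nth None (map Some s)) (iota 0 T).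
  by rewrite -val_enum_ord -map_comp; apply: eq_map => i /=; rewrite ffunE.
rewrite -(subnKC s_le) iotaD map_cat pmap_cat add0n.
have -> : map (nth None (map Some s)) (iota 0 (size s)) = map Some s.
  by rewrite -{2}(mkseq_nth None (map Some s)) size_map.
rewrite (map_pK (g := Some) (f := id)) //.
suff -> : map (nth None (map Some s)) (iota (size s) (T - size s)%N) =
    nseq (T - size s)%N None.
  by rewrite -[RHS]cats0; congr (_ ++ _); elim: (T - size s)%N.
apply: (@eq_from_nth _ None); rewrite ?size_map ?size_iota ?size_nseq // => i i_lt.
rewrite nth_nseq i_lt (nth_map 0) ?size_iota // nth_iota //.
by rewrite nth_default // size_map leq_addr.
Qed.

Definition pure_strat := {ffun K * ({ffun 'I_T -> option A} * {ffun 'I_T -> option B}) -> X}.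

Definition pure_play (i : pure_strat) k : seq A -> seq B -> X -> R :=
  pure_behav R (fun hA hB => i (k, (hist_code hA, hist_code hB))).

Definition pure_of (g : K -> seq A -> seq B -> X) : pure_strat :=
  [ffun c => g c.1 (hist_decode c.2.1) (hist_decode c.2.2)].

Lemma pure_play_ok i k : behav T (pure_play i k).
Proof. exact: pure_behav_ok. Qed.

Lemma pure_play_of g k hA hB x : size hA = size hB -> (size hA < T)%N ->
  pure_play (pure_of g) k hA hB x = pure_behav R (g k) hA hB x.
Proof.
move=> hs /ltnW hT.
by rewrite /pure_play /pure_behav ffunE /= !hist_codeK // -hs.
Qed.

End PureStrategies.

Lemma inf_attained (R : realType) (E : set R) m : E m -> lbound E m -> inf E = m.
Proof.
move=> Em m_lb; apply/le_anti/andP; split; first exact: (ge_inf (ex_intro _ m m_lb)).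
by apply: lb_le_inf => //; exists m.
Qed.

Lemma sup_attained (R : realType) (E : set R) m : E m -> ubound E m -> sup E = m.
Proof.
move=> Em m_ub; apply/le_anti/andP; split; first by apply: ge_sup => //; exists m.
exact: (ub_le_sup (ex_intro _ m m_ub)).
Qed.

Section PrimalLP.
Variables (R : realType) (K L A B : finType) (M : K -> L -> A -> B -> R)
  (p : K -> R) (q : L -> R) (lam : R) (T : nat) (b0 : B).
Hypotheses (lam_gt0 : 0 < lam) (lam_lt1 : lam < 1) (T_gt0 : (0 < T)%N)
  (A_gt0 : (0 < #|A|)%N) (p_gt0 : forall k, 0 < p k) (q_gt0 : forall l, 0 < q l).

Local Notation plan1 := (K -> seq A -> seq B -> A -> R).
Local Notation payoff := (payoff M p q lam T).

Let lam_ge0 : 0 <= lam. Proof. exact: ltW. Qed.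
Let lam_le1 : lam <= 1. Proof. exact: ltW. Qed.

Lemma u_sec_sum_cont x t l : inX p T x ->
  \sum_k p k * cont M lam (sigma_of x) (fun=> t) k l [::] [::] T =
  cont_plan M lam x t l [::] [::] T.
Proof.
move=> x_in; rewrite (cont_planE M lam t l x_in (sigma_of_compatible x_in)) //.
by apply: eq_bigr => k _; rewrite (reach_nil k x_in).
Qed.

Lemma primal_obj_le_payoff x u0 U tau : primal_feas M p lam T x u0 U ->
  strat2_ok T tau -> primal_obj q u0 <= payoff (sigma_of x) tau.
Proof.
move=> feas tau_ok; have [x_in _ _ _] := feas.
rewrite (payoff_cont_plan M q lam tau x_in (sigma_of_compatible x_in)).
apply: ler_sum => l _; rewrite ler_pM2l //.
exact: (primal_feas_le_cont_plan feas lam_ge0 lam_le1 l T_gt0 (tau_ok l)).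
Qed.

Lemma payoff_br x : inX p T x ->
  payoff (sigma_of x) (br_strat M lam T b0 x) = primal_obj q (br_u0 M lam T b0 x).
Proof.
move=> x_in; rewrite (payoff_cont_plan M q lam _ x_in (sigma_of_compatible x_in)).
by apply: eq_bigr => l _; rewrite br_u0_cont_plan.
Qed.

Lemma payoff_lbound sigma : strat1_ok T sigma ->
  exists c, forall tau, strat2_ok T tau -> c <= payoff sigma tau.
Proof.
move=> sigma_ok; have x_in := inX_plan_of sigma_ok (fun k => ltW (p_gt0 k)) T_gt0.
exists (primal_obj q (br_u0 M lam T b0 (plan_of p sigma))) => tau tau_ok.
rewrite (payoff_cont_plan M q lam tau x_in (plan_of_compatible p sigma_ok)).
apply: ler_sum => l _; rewrite ler_pM2l //.
exact: (primal_feas_le_cont_plan (br_feasible M lam b0 x_in T_gt0)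
  lam_ge0 lam_le1 l T_gt0 (tau_ok l)).
Qed.

Lemma primal_u0_le_br x u0 U l : primal_feas M p lam T x u0 U ->
  u0 l <= br_u0 M lam T b0 x l.
Proof.
move=> feas; rewrite -br_u0_cont_plan.
exact: (primal_feas_le_cont_plan feas lam_ge0 lam_le1 l T_gt0 (pure_behav_ok R _)).
Qed.

Lemma u_sec_br x l : inX p T x -> u_sec M p lam T x l = br_u0 M lam T b0 x l.
Proof.
move=> x_in; apply: inf_attained.
  exists (br_strat M lam T b0 x l); first exact: pure_behav_ok.
  by rewrite u_sec_sum_cont // br_u0_cont_plan.
move=> v [t t_ok ->]; rewrite u_sec_sum_cont //.
exact: (primal_feas_le_cont_plan (br_feasible M lam b0 x_in T_gt0)
  lam_ge0 lam_le1 l T_gt0 t_ok).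
Qed.

Lemma inX_mix (I : finType) (mu : I -> R) (xs : I -> plan1) :
  is_dist mu -> (forall i, inX p T (xs i)) -> inX p T (mix_plan mu xs).
Proof.
move=> [mu_ge0 mu_sum] xs_in; split.
- move=> k hA hB a hs hT; apply: sumr_ge0 => i _; apply: mulr_ge0 => //.
  by case: (xs_in i) => + _ _; apply.
- move=> k; rewrite exchange_big /=.
  under eq_bigr => i _ do rewrite -mulr_sumr -/(reach _ _ _ _) (reach_nil k (xs_in i)).
  by rewrite -mulr_suml mu_sum mul1r.
- move=> k hA hB a b hs hT; rewrite exchange_big /=; apply: eq_bigr => i _.
  by rewrite -mulr_sumr; case: (xs_in i) => _ _ ->.
Qed.

(* Against a fixed strategy of player 2 the payoff is linear in the
   realization plan, so the mixture of the plans of [pis] with weights [mu]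
   does as well as the mixed strategy [mu] (Kuhn's theorem); its worst case is
   attained at a pure best reply, which is one of the [rhos]. *)
Lemma mix_plan_guarantee (I J : finType) (pis : I -> plan1)
    (rhos : J -> L -> seq A -> seq B -> B -> R) (mu : I -> R) v :
  (forall i, strat1_ok T (pis i)) -> is_dist mu ->
  (forall g : L -> seq A -> seq B -> B, exists j, forall l hA hB b,
     size hA = size hB -> (size hA < T)%N -> rhos j l hA hB b = pure_behav R (g l) hA hB b) ->
  (forall j, v <= \sum_i mu i * payoff (pis i) (rhos j)) ->
  let x := mix_plan mu (fun i => plan_of p (pis i)) in
  inX p T x /\ forall tau, strat2_ok T tau -> v <= payoff (sigma_of x) tau.
Proof.
move=> pis_ok dmu rhos_pure v_le x.
have xs_in i := inX_plan_of (pis_ok i) (fun k => ltW (p_gt0 k)) T_gt0.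
have x_in : inX p T x by exact: inX_mix.
split=> // tau tau_ok.
apply: le_trans (primal_obj_le_payoff (br_feasible M lam b0 x_in T_gt0) tau_ok).
have [j j_br] := rhos_pure (br_move M lam T b0 x).
rewrite -payoff_br //; apply: le_trans (v_le j) _; rewrite le_eqVlt; apply/predU1P; left.
rewrite (payoff_cont_plan M q lam _ x_in (sigma_of_compatible x_in)).
under eq_bigr do
  rewrite (payoff_cont_plan M q lam _ (xs_in _) (plan_of_compatible p (pis_ok _))).
under [RHS]eq_bigr => l _.
  rewrite (eq_cont_plan M lam x l (fun hA hB b hs hT => esym (j_br l hA hB b hs hT))) //.
  rewrite /x cont_plan_mix mulr_sumr.
  over.
rewrite exchange_big /=; apply: eq_bigr => i _.
by rewrite mulr_sumr; apply: eq_bigr => l _; ring.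
Qed.

Lemma tau_of_strat (y : L -> seq A -> seq B -> B -> R) :
  inY q T y -> strat2_ok T (tau_of y).
Proof.
move=> /inY_flip y_in; apply: strat_flip; apply: sigma_of_strat y_in _.
by apply/card_gt0P; exists b0.
Qed.

Definition saddle v xs ys := [/\ inX p T xs, inY q T ys,
  forall tau, strat2_ok T tau -> v <= payoff (sigma_of xs) tau &
  forall sigma, strat1_ok T sigma -> payoff sigma (tau_of ys) <= v].

Section SaddlePoint.
Variables (v : R) (xs : plan1) (ys : L -> seq A -> seq B -> B -> R).
Hypothesis (sp : saddle v xs ys).

Lemma value_saddle : value M p q lam T = v.
Proof.
have [xs_in ys_in v_le le_v] := sp; have ys_ok := tau_of_strat ys_in.
have inf_xs : inf [set w | exists2 t, strat2_ok T t & w = payoff (sigma_of xs) t] = v.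
  apply/le_anti/andP; split.
    apply: le_trans (le_v _ (sigma_of_strat xs_in A_gt0)).
    have v_lb : has_lbound [set w | exists2 t, strat2_ok T t & w = payoff (sigma_of xs) t].
      by exists v => _ [t t_ok ->]; exact: v_le.
    by apply: (ge_inf v_lb); exists (tau_of ys).
  apply: lb_le_inf; first by exists (payoff (sigma_of xs) (tau_of ys)), (tau_of ys).
  by move=> _ [t t_ok ->]; exact: v_le.
apply: sup_attained.
  by exists (sigma_of xs); [exact: sigma_of_strat xs_in A_gt0 | rewrite inf_xs].
move=> _ [s s_ok ->]; apply: le_trans (le_v s s_ok).
have [c c_le] := payoff_lbound s_ok.
have c_lb : has_lbound [set w | exists2 t, strat2_ok T t & w = payoff s t].
  by exists c => _ [t t_ok ->]; exact: c_le.
by apply: (ge_inf c_lb); exists (tau_of ys).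
Qed.

Lemma primal_obj_le_saddle x u0 U : primal_feas M p lam T x u0 U -> primal_obj q u0 <= v.
Proof.
move=> feas; have [x_in _ _ _] := feas; have [_ ys_in _ le_v] := sp.
apply: le_trans (primal_obj_le_payoff feas (tau_of_strat ys_in)) _.
exact: le_v (sigma_of_strat x_in A_gt0).
Qed.

Lemma primal_opt_u0 x u0 U : primal_feas M p lam T x u0 U -> primal_obj q u0 = v ->
  forall l, u0 l = br_u0 M lam T b0 x l.
Proof.
move=> feas opt; have [x_in _ _ _] := feas.
apply: wsum_ler_eq q_gt0 (fun l => primal_u0_le_br l feas) _.
rewrite -/(primal_obj q _) -/(primal_obj q u0) opt.
exact: primal_obj_le_saddle (br_feasible M lam b0 x_in T_gt0).
Qed.

Lemma primal_lp_value :
  [/\ (exists x u0 U, primal_feas M p lam T x u0 U /\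
                      primal_obj q u0 = value M p q lam T),
      (forall x u0 U, primal_feas M p lam T x u0 U ->
                      primal_obj q u0 <= value M p q lam T) &
      (forall x u0 U, primal_feas M p lam T x u0 U ->
         primal_obj q u0 = value M p q lam T ->
         (exists sigma, security1 M p q lam T sigma /\ rplan1 p T sigma x) /\
         (forall l, u_sec M p lam T x l = u0 l))].
Proof.
have [xs_in _ v_le _] := sp; rewrite /security1 value_saddle; split.
- exists xs, (br_u0 M lam T b0 xs), (br_U M lam T b0 xs).
  have br_feas := br_feasible M lam b0 xs_in T_gt0.
  split=> //; apply/le_anti; rewrite (primal_obj_le_saddle br_feas) /=.
  by rewrite -payoff_br //; apply: v_le => l; exact: pure_behav_ok.
- exact: primal_obj_le_saddle.
move=> x u0 U feas opt; have [x_in _ _ _] := feas; split.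
  exists (sigma_of x); split; last exact: rplan1_sigma_of.
  split=> [|tau tau_ok]; first exact: sigma_of_strat x_in A_gt0.
  by rewrite -opt; exact: primal_obj_le_payoff feas tau_ok.
by move=> l; rewrite (u_sec_br l x_in) (primal_opt_u0 feas opt).
Qed.

End SaddlePoint.

Lemma exists_plan_guarantee (mu : pure_strat K A B A T -> R) v : is_dist mu ->
  (forall j : pure_strat L A B B T,
     v <= \sum_i mu i * payoff (pure_play R i) (pure_play R j)) ->
  exists xs, inX p T xs /\ forall tau, strat2_ok T tau -> v <= payoff (sigma_of xs) tau.
Proof.
move=> dmu v_le; eexists; apply: mix_plan_guarantee dmu _ v_le => [i|g].
  exact: pure_play_ok.
by exists (pure_of T g) => l hA hB b; exact: pure_play_of.
Qed.

End PrimalLP.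

Section Duality.
Variables (R : realType) (K L A B : finType) (M : K -> L -> A -> B -> R)
  (p : K -> R) (q : L -> R) (lam : R) (T : nat).

Lemma saddle_swap v xs ys : saddle M p q lam T v xs ys ->
  saddle (swap_game M) q p lam T (- v) (flip_hist ys) (flip_hist xs).
Proof.
case=> xs_in ys_in v_le le_v; split; [exact/inY_flip | exact/inY_flip | |].
  move=> tau tau_ok; rewrite lerNl.
  by have := le_v _ (strat_flip tau_ok); rewrite payoff_swap.
move=> sigma sigma_ok; rewrite lerNr.
by have := v_le _ (strat_flip sigma_ok); rewrite payoff_swap.
Qed.

Lemma dual_row_swap (y : L -> seq A -> seq B -> B -> R)
    (W W' : K -> seq A -> seq B -> A -> B -> R) k hA hB a :
  (forall b, W' k hA hB a b = - W k hA hB a b) ->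
  lam * (\sum_l \sum_b M k l a b * y l hA hB b) + (1 - lam) * \sum_b W k hA hB a b =
  - (lam * (\sum_l \sum_b swap_game M l k b a * y l hA hB b)
     + (1 - lam) * \sum_b W' k hA hB a b).
Proof.
move=> W'E; rewrite opprD -!mulrN -!sumrN; congr (_ * _ + _ * _).
  apply: eq_bigr => l _; rewrite -sumrN; apply: eq_bigr => b _.
  by rewrite /swap_game mulNr opprK.
by apply: eq_bigr => b _; rewrite W'E opprK.
Qed.

Lemma dual_feas_of_swap x' u0' U' :
  primal_feas (swap_game M) q lam T x' u0' U' ->
  dual_feas M q lam T (flip_hist x') (fun k => - u0' k)
    (fun k hA hB a b => - U' k hB hA b a).
Proof.
case=> x'_in U'_last u0'_le U'_next.
have row k hA hB a :
    lam * (\sum_l \sum_b M k l a b * x' l hB hA b) + (1 - lam) * \sum_b - U' k hB hA b a =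
    - (lam * (\sum_l \sum_b swap_game M l k b a * x' l hB hA b)
       + (1 - lam) * \sum_b U' k hB hA b a).
  apply: (@dual_row_swap (flip_hist x') (fun k hA hB a b => - U' k hB hA b a)
    (fun k hA hB a b => U' k hB hA b a)) => b.
  by rewrite opprK.
split.
- exact/inY_flip.
- by move=> k hA hB a b hs hT; rewrite U'_last ?oppr0 // -hs.
- by move=> k a; rewrite row lerN2.
- by move=> k hA hB a b a' hs hT; rewrite row lerN2; apply: U'_next; rewrite -?hs.
Qed.

Lemma swap_of_dual_feas y w0 W : dual_feas M q lam T y w0 W ->
  primal_feas (swap_game M) q lam T (flip_hist y) (fun k => - w0 k)
    (fun k hB hA b a => - W k hA hB a b).
Proof.
case=> y_in W_last w0_ge W_next.
have row k hA hB a :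
    lam * (\sum_l \sum_b M k l a b * y l hA hB b) + (1 - lam) * \sum_b W k hA hB a b =
    - (lam * (\sum_l \sum_b swap_game M l k b a * y l hA hB b)
       + (1 - lam) * \sum_b - W k hA hB a b).
  exact: (@dual_row_swap y W (fun k hA hB a b => - W k hA hB a b)).
split.
- by apply/inY_flip.
- by move=> k hB hA b a hs hT; rewrite W_last ?oppr0 // -hs.
- by move=> k a; rewrite -lerN2 -row opprK.
- by move=> k hB hA b a a' hs hT; rewrite -lerN2 -row opprK; apply: W_next; rewrite -?hs.
Qed.

Lemma w_sec_swap (y : L -> seq A -> seq B -> B -> R) k :
  w_sec M q lam T y k = - u_sec (swap_game M) q lam T (flip_hist y) k.
Proof.
rewrite /w_sec /u_sec /inf opprK; congr sup; apply/seteqP; split=> w.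
- move=> [s s_ok ->]; exists (\sum_l q l * cont (swap_game M) lam (sigma_of (flip_hist y))
       (fun=> fun hB hA a => s hA hB a) l k [::] [::] T).
    by exists (fun hB hA a => s hA hB a); first exact: behav_flip.
  rewrite -sumrN; apply: eq_bigr => l _.
  by rewrite [in RHS]cont_swap // mulrN.
- move=> [_ [t t_ok ->] <-]; exists (fun hA hB a => t hB hA a); first exact: behav_flip.
  rewrite -sumrN; apply: eq_bigr => l _.
  by rewrite [in RHS]cont_swap // mulrN.
Qed.

Variables (a0 : A) (b0 : B).
Hypotheses (lam_gt0 : 0 < lam) (lam_lt1 : lam < 1) (T_gt0 : (0 < T)%N)
  (p_gt0 : forall k, 0 < p k) (q_gt0 : forall l, 0 < q l).

Let A_gt0 : (0 < #|A|)%N. Proof. by apply/card_gt0P; exists a0. Qed.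
Let B_gt0 : (0 < #|B|)%N. Proof. by apply/card_gt0P; exists b0. Qed.

Lemma dual_lp_value v xs ys : saddle M p q lam T v xs ys ->
  [/\ (exists y w0 W, dual_feas M q lam T y w0 W /\
                      dual_obj p w0 = value M p q lam T),
      (forall y w0 W, dual_feas M q lam T y w0 W ->
                      value M p q lam T <= dual_obj p w0) &
      (forall y w0 W, dual_feas M q lam T y w0 W ->
         dual_obj p w0 = value M p q lam T ->
         (exists tau, security2 M p q lam T tau /\ rplan2 q T tau y) /\
         (forall k, w_sec M q lam T y k = w0 k))].
Proof.
move=> sp; have sp' := saddle_swap sp.
have [P_att P_le P_opt] := primal_lp_value a0 lam_gt0 lam_lt1 T_gt0 B_gt0 q_gt0 p_gt0 sp'.
have obj_opp (w : K -> R) : primal_obj p (fun k => - w k) = - dual_obj p w.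
  by rewrite -sumrN; apply: eq_bigr => k _; rewrite mulrN.
rewrite /security1 (value_saddle a0 lam_gt0 lam_lt1 T_gt0 B_gt0 q_gt0 p_gt0 sp')
  in P_att P_le P_opt.
rewrite /security2 (value_saddle b0 lam_gt0 lam_lt1 T_gt0 A_gt0 p_gt0 q_gt0 sp); split.
- have [x' [u0' [U' [feas obj]]]] := P_att.
  exists (flip_hist x'), (fun k => - u0' k), (fun k hA hB a b => - U' k hB hA b a).
  split; first exact: dual_feas_of_swap.
  by rewrite -[v]opprK -obj; exact: obj_opp.
- move=> y w0 W /swap_of_dual_feas/P_le; by rewrite obj_opp lerN2.
move=> y w0 W feas opt.
have opt' : primal_obj p (fun k => - w0 k) = - v by rewrite obj_opp opt.
have [[sigma' [[sigma'_ok sigma'_ge] sigma'_plan]] u_eq] :=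
  P_opt _ _ _ (swap_of_dual_feas feas) opt'.
split; last by move=> k; rewrite w_sec_swap u_eq opprK.
exists (flip_hist sigma'); split; last exact/rplan2_flip.
split=> [|sigma sigma_ok]; first exact: strat_flip.
by rewrite payoff_swap lerNl; apply: sigma'_ge; exact: strat_flip.
Qed.

Lemma exists_plan_guarantee_dual (nu : pure_strat L A B B T -> R) v : is_dist nu ->
  (forall i : pure_strat K A B A T,
     \sum_j payoff M p q lam T (pure_play R i) (pure_play R j) * nu j <= v) ->
  exists ys, inY q T ys /\
    forall sigma, strat1_ok T sigma -> payoff M p q lam T sigma (tau_of ys) <= v.
Proof.
move=> dnu le_v.
pose pis (j : pure_strat L A B B T) : L -> seq B -> seq A -> B -> R :=
  flip_hist (pure_play R j).
pose rhos (i : pure_strat K A B A T) : K -> seq B -> seq A -> A -> R :=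
  flip_hist (pure_play R i).
have pis_ok j : strat1_ok T (pis j) by apply: strat_flip; exact: pure_play_ok.
have rhos_pure (g : K -> seq B -> seq A -> A) : exists i, forall k hB hA a,
    size hB = size hA -> (size hB < T)%N -> rhos i k hB hA a = pure_behav R (g k) hB hA a.
  exists (pure_of T (fun k hA hB => g k hB hA)) => k hB hA a hs hT.
  by rewrite /rhos /flip_hist pure_play_of // -hs.
have ge_v i : - v <= \sum_j nu j * payoff (swap_game M) q p lam T (pis j) (rhos i).
  rewrite lerNl -sumrN; apply: le_trans (le_v i); rewrite le_eqVlt; apply/predU1P; left.
  by apply: eq_bigr => j _; rewrite [in RHS]payoff_swap mulNr mulrC.
have [x_in x_ge] :=
  mix_plan_guarantee a0 lam_gt0 lam_lt1 T_gt0 q_gt0 p_gt0 pis_ok dnu rhos_pure ge_v.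
exists (flip_hist (mix_plan nu (fun j => plan_of q (pis j)))); split; first exact/inY_flip.
move=> sigma sigma_ok; rewrite payoff_swap lerNl.
exact: x_ge (strat_flip sigma_ok).
Qed.

Lemma exists_saddle : exists v xs ys, saddle M p q lam T v xs ys.
Proof.
have [v [mu [nu [dmu dnu mu_ge nu_le]]]] := minimax [ffun=> a0] [ffun=> b0]
  (fun (i : pure_strat K A B A T) (j : pure_strat L A B B T) =>
     payoff M p q lam T (pure_play R i) (pure_play R j)).
have [xs [xs_in xs_ge]] :=
  exists_plan_guarantee b0 lam_gt0 lam_lt1 T_gt0 p_gt0 q_gt0 dmu mu_ge.
have [ys [ys_in ys_le]] := exists_plan_guarantee_dual dnu nu_le.
by exists v, xs, ys; split.
Qed.

End Duality.

Theorem theorem3 (R : realType) (K L A B : finType)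
  (M : K -> L -> A -> B -> R) (p : K -> R) (q : L -> R) (lam : R) (T : nat) :
  0 < lam < 1 -> (1 <= T)%N -> (0 < #|A|)%N -> (0 < #|B|)%N ->
  (forall k, 0 < p k) -> \sum_k p k = 1 ->
  (forall l, 0 < q l) -> \sum_l q l = 1 ->
  [/\ (* V = max of the primal LP, attained *)
      (exists x u0 U, primal_feas M p lam T x u0 U /\
                      primal_obj q u0 = value M p q lam T),
      (forall x u0 U, primal_feas M p lam T x u0 U ->
                      primal_obj q u0 <= value M p q lam T) &
      (* properties of optimal primal solutions *)
      (forall x u0 U, primal_feas M p lam T x u0 U ->
         primal_obj q u0 = value M p q lam T ->
         (exists sigma, security1 M p q lam T sigma /\ rplan1 p T sigma x) /\
         (forall l, u_sec M p lam T x l = u0 l))] /\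
  [/\ (* V = min of the dual LP, attained *)
      (exists y w0 W, dual_feas M q lam T y w0 W /\
                      dual_obj p w0 = value M p q lam T),
      (forall y w0 W, dual_feas M q lam T y w0 W ->
                      value M p q lam T <= dual_obj p w0) &
      (* properties of optimal dual solutions *)
      (forall y w0 W, dual_feas M q lam T y w0 W ->
         dual_obj p w0 = value M p q lam T ->
         (exists tau, security2 M p q lam T tau /\ rplan2 q T tau y) /\
         (forall k, w_sec M q lam T y k = w0 k))].
Proof.
move=> /andP[lam_gt0 lam_lt1] T_gt0 A_gt0 B_gt0 p_gt0 _ q_gt0 _.
have [a0 _] := card_gt0P A_gt0; have [b0 _] := card_gt0P B_gt0.
have [v [xs [ys sp]]] := exists_saddle M a0 b0 lam_gt0 lam_lt1 T_gt0 p_gt0 q_gt0.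
split; first exact: primal_lp_value b0 lam_gt0 lam_lt1 T_gt0 A_gt0 p_gt0 q_gt0 _ _ _ sp.
exact: dual_lp_value a0 b0 lam_gt0 lam_lt1 T_gt0 p_gt0 q_gt0 _ _ _ sp.
Qed.
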